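(* Let $(X,\mathcal U)$ be a point-rotund quasi-uniform space. Then the following are equivalent: (1) $(X,\mathcal U)$ is uniformly semiregular; (2) $(X,\mathcal U)$ is uniformly regular; (3) $(X,\mathcal U)$ is uniformly completely regular. If moreover $(X,\mathcal U)$ is rotund, then (1)–(3) are equivalent to each of: (4) $\mathcal U$ is generated by a family of right-continuous premetrics; (5) $\mathcal U$ is generated by a family $\mathcal D$ of right-continuous and $\overline{\mathsf{dist}}$-continuous quasi-pseudometrics with $|\mathcal D|\le\chi(\mathcal U)$.
   Context: Entourages on $X$ are subsets of $X\times X$ containing the diagonal; $U\circ V=\{(x,z):\exists y\,((x,y)\in U,(y,z)\in V)\}$, $B(x;U)=\{y:(x,y)\in U\}$, $B(A;U)=\bigcup_{a\in A}B(a;U)$. A quasi-uniformity $\mathcal U$ on $X$ is a family of entourages closed under supersets, with any two members containing a common member, and such that each $U\in\mathcal U$ contains $V\circ V$ for some $V\in\mathcal U$. All topological notions refer to the topology $\tau_{\mathcal U}$ ($W$ open iff each $x\in W$ has $B(x;U)\subset W$ for some $U\in\mathcal U$); $\overline S$ is closure, $\overline S^\circ$ interior of closure. A base $\mathcal B\subset\mathcal U$ (each member of $\mathcal U$ contains a member of $\mathcal B$) is multiplicative if closed under $\circ$; point-rotund if $\overline{B(x;V)}\subset\overline{B(x;V\circ U)}^\circ$ for all $x$ and $U,V\in\mathcal B$; rotund if $B(\overline A;U)\subset\overline{B(A;W\circ U)}$ for all $A\subset X$, $U,W\in\mathcal B$. $(X,\mathcal U)$ is point-rotund (rotund) if $\mathcal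 U$ has a point-rotund (rotund) multiplicative base. $\chi(\mathcal U)$ is the least cardinality of a base of $\mathcal U$. A premetric is $d:X\times X\to[0,\infty)$ with $d(x,x)=0$; a quasi-pseudometric also satisfies the triangle inequality. $[d]_{<\varepsilon}=\{(x,y):d(x,y)<\varepsilon\}$, $B_d(x,\varepsilon)=\{y:d(x,y)<\varepsilon\}$, $B_d(A,\varepsilon)=\bigcup_{a\in A}B_d(a,\varepsilon)$. $d$ is $\mathcal U$-uniform if $[d]_{<\varepsilon}\in\mathcal U$ for all $\varepsilon>0$; right-continuous if $y\mapsto d(x,y)$ is continuous for each $x$; $\overline{\mathsf{dist}}$-continuous if for every non-empty $A\subset X$ the function $x\mapsto\inf\{\varepsilon>0:x\in\overline{B_d(A,\varepsilon)}\}$ is continuous. A family $\mathcal D$ of premetrics generates $\mathcal U$ if $\{[d]_{<\varepsilon}:d\in\mathcal D,\varepsilon>0\}$ is a subbase of $\mathcal U$ (finite intersections form a base). $(X,\mathcal U)$ is uniformly regular if for every $U\in\mathcal U$ there is $V\in\mathcal U$ with $\overline{B(x;V)}\subset B(x;U)$ for all $x$; uniformly semiregular if for every $U\in\mathcal U$ there is $V\in\mathcal U$ with $\overline{B(x;V)}^\circ\subset B(x;U)$ for all $x$; uniformly completely regular if for every $U\in\mathcal U$ there is a $\mathcal U$-uniform right-continuous premetric $d:X\times X\to[0,1]$ with $B_d(x,1)\subset B(x;U)$ for all $x$. *)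

From Stdlib Require Import Reals List.
Open Scope R_scope.

Section QU.
Variable X : Type.

Definition entourage := X -> X -> Prop.

Definition comp (U V : entourage) : entourage :=
  fun x z => exists y, U x y /\ V y z.

Definition ball (x : X) (U : entourage) : X -> Prop := fun y => U x y.
Definition ballS (A : X -> Prop) (U : entourage) : X -> Prop :=
  fun y => exists a, A a /\ U a y.

Definition subrel (U V : entourage) := forall x y, U x y -> V x y.
Definition subset (A B : X -> Prop) := forall x, A x -> B x.

Definition quasi_uniformity (Q : entourage -> Prop) : Prop :=
  Q (fun _ _ => True) /\
  (forall U, Q U -> forall x, U x x) /\
  (forall U V, Q U -> subrel U V -> Q V) /\
  (forall U V, Q U -> Q V -> exists W, Q W /\ subrel W U /\ subrel W V) /\
  (forall U, Q U -> exists V, Q V /\ subrel (comp V V) U).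

Definition qopen (Q : entourage -> Prop) (W : X -> Prop) : Prop :=
  forall x, W x -> exists U, Q U /\ subset (ball x U) W.

Definition closure (Q : entourage -> Prop) (S : X -> Prop) : X -> Prop :=
  fun x => forall W, qopen Q W -> W x -> exists y, W y /\ S y.

Definition interior (Q : entourage -> Prop) (S : X -> Prop) : X -> Prop :=
  fun x => exists W, qopen Q W /\ W x /\ subset W S.

Definition is_base (Q : entourage -> Prop) (B : entourage -> Prop) : Prop :=
  (forall U, B U -> Q U) /\ (forall U, Q U -> exists V, B V /\ subrel V U).

Definition multiplicative (B : entourage -> Prop) : Prop :=
  forall U V, B U -> B V -> B (comp U V).

Definition point_rotund_base (Q : entourage -> Prop) (B : entourage -> Prop) :=
  forall x U V, B U -> B V ->
    subset (closure Q (ball x V)) (interior Q (closure Q (ball x (comp V U)))).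

Definition rotund_base (Q : entourage -> Prop) (B : entourage -> Prop) :=
  forall (A : X -> Prop) U W, B U -> B W ->
    subset (ballS (closure Q A) U) (closure Q (ballS A (comp W U))).

Definition point_rotund (Q : entourage -> Prop) :=
  exists B, is_base Q B /\ multiplicative B /\ point_rotund_base Q B.

Definition rotund (Q : entourage -> Prop) :=
  exists B, is_base Q B /\ multiplicative B /\ rotund_base Q B.

(* |D| <= chi(U): D injects into every base of U (chi(U) is the least
   cardinality of a base, a minimum of cardinals). *)
Definition card_le_chi (Q : entourage -> Prop) (D : (X -> X -> R) -> Prop) :=
  forall B, is_base Q B ->
    exists f : {d | D d} -> {b | B b}, forall a b, f a = f b -> a = b.

Definition premetric (d : X -> X -> R) : Prop :=
  (forall x y, 0 <= d x y) /\ (forall x, d x x = 0).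

Definition quasi_pseudometric (d : X -> X -> R) : Prop :=
  premetric d /\ (forall x y z, d x z <= d x y + d y z).

Definition strict_ent (d : X -> X -> R) (e : R) : entourage :=
  fun x y => d x y < e.

Definition dball (d : X -> X -> R) (x : X) (e : R) : X -> Prop :=
  fun y => d x y < e.

Definition dballS (d : X -> X -> R) (A : X -> Prop) (e : R) : X -> Prop :=
  fun y => exists a, A a /\ d a y < e.

Definition uniform_premetric (Q : entourage -> Prop) (d : X -> X -> R) :=
  forall e, 0 < e -> Q (strict_ent d e).

Definition openR (O : R -> Prop) : Prop :=
  forall r, O r -> exists del, 0 < del /\ forall s, Rabs (s - r) < del -> O s.

Definition qcontinuous (Q : entourage -> Prop) (f : X -> R) : Prop :=
  forall O, openR O -> qopen Q (fun x => O (f x)).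

Definition right_continuous (Q : entourage -> Prop) (d : X -> X -> R) :=
  forall x, qcontinuous Q (fun y => d x y).

Definition is_inf (S : R -> Prop) (r : R) : Prop :=
  (forall s, S s -> r <= s) /\ (forall l, (forall s, S s -> l <= s) -> l <= r).

Definition distbar_continuous (Q : entourage -> Prop) (d : X -> X -> R) :=
  forall (A : X -> Prop), (exists a, A a) ->
    forall f : X -> R,
      (forall x, is_inf (fun e => 0 < e /\ closure Q (dballS d A e) x) (f x)) ->
      qcontinuous Q f.

(* D generates U: finite intersections of [d]_{<e} (d in D, e>0) form a base *)
Definition generates (Q : entourage -> Prop) (D : (X -> X -> R) -> Prop) :=
  forall W, Q W <->
    exists l : list ((X -> X -> R) * R),
      Forall (fun p => D (fst p) /\ 0 < snd p) l /\
      forall x y, Forall (fun p => fst p x y < snd p) l -> W x y.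

Definition uniformly_regular (Q : entourage -> Prop) :=
  forall U, Q U -> exists V, Q V /\
    forall x, subset (closure Q (ball x V)) (ball x U).

Definition uniformly_semiregular (Q : entourage -> Prop) :=
  forall U, Q U -> exists V, Q V /\
    forall x, subset (interior Q (closure Q (ball x V))) (ball x U).

Definition uniformly_completely_regular (Q : entourage -> Prop) :=
  forall U, Q U -> exists d : X -> X -> R,
    premetric d /\ (forall x y, d x y <= 1) /\
    uniform_premetric Q d /\ right_continuous Q d /\
    forall x, subset (dball d x 1) (ball x U).

End QU.

Arguments quasi_uniformity {X}.
Arguments point_rotund {X}.
Arguments rotund {X}.
Arguments uniformly_regular {X}.
Arguments uniformly_semiregular {X}.
Arguments uniformly_completely_regular {X}.
Arguments premetric {X}.
Arguments quasi_pseudometric {X}.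
Arguments right_continuous {X}.
Arguments distbar_continuous {X}.
Arguments generates {X}.
Arguments card_le_chi {X}.

(* From a regular quasi-uniformity choose a chain [V 0], [V 1], ... in a
   multiplicative base with [V (n+1) o V (n+1) <= V n].  Composing the [V n]
   along binary expansions attaches an entourage [W(j/2^K)] to every dyadic, and
   [rho x y = inf {j/2^K | y in cl B(x; W(j/2^K))}] (capped at 1) is an
   Urysohn-type premetric with [rho x y < 1] only inside [cl B(x; V 0)].  It is
   lower semicontinuous in [y] because complements of closures are open, and
   point-rotundity makes it upper semicontinuous; point-rotundity also turns
   semiregularity into regularity.  Under rotundity the quasi-pseudometric
   [sup_z (rho z y - rho z x)] has the same properties and is dist-bar
   continuous; one such quasi-pseudometric per member of a base of least
   cardinality gives the generating family of (5). *)

From Stdlib Require Import Reals Lra Lia ZArith List Classical ClassicalEpsilon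
  FunctionalExtensionality PropExtensionality ProofIrrelevance.
From mathcomp Require classical_sets.
Open Scope R_scope.

Arguments comp {X}.
Arguments ball {X}.
Arguments ballS {X}.
Arguments subrel {X}.
Arguments subset {X}.
Arguments closure {X}.
Arguments interior {X}.
Arguments is_base {X}.
Arguments multiplicative {X}.
Arguments point_rotund_base {X}.
Arguments rotund_base {X}.
Arguments strict_ent {X}.
Arguments dball {X}.
Arguments dballS {X}.
Arguments uniform_premetric {X}.
Arguments qcontinuous {X}.

Lemma is_inf_exists (S : R -> Prop) :
  (exists r, S r) -> (exists b, forall r, S r -> b <= r) -> {m | is_inf S m}.
Proof.
  intros Hne Hlb.
  destruct (completeness (fun r => S (- r))) as [m [Hub Hlub]].
  - destruct Hlb as [b Hb]. exists (- b). intros r Sr. apply Hb in Sr. lra.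
  - destruct Hne as [r Sr]. exists (- r). rewrite Ropp_involutive; exact Sr.
  - exists (- m). split.
    + intros s Ss. enough (- s <= m) by lra. apply Hub. rewrite Ropp_involutive; exact Ss.
    + intros l Hl. enough (m <= - l) by lra. apply Hlub. intros r Sr. apply Hl in Sr. lra.
Qed.

Lemma is_inf_lt (S : R -> Prop) m t : is_inf S m -> m < t -> exists r, S r /\ r < t.
Proof.
  intros [_ Hglb] Hmt. apply NNPP; intros N.
  enough (t <= m) by lra. apply Hglb. intros s Ss.
  apply Rnot_lt_le. intros Hs. apply N. exists s; auto.
Qed.

Lemma openR_gt a : openR (fun r => a < r).
Proof.
  intros r Hr. exists (r - a); split; [lra|].
  intros s Hs. apply Rabs_def2 in Hs. lra.
Qed.

Definition dyadic (K j : nat) : R := INR j / 2 ^ K.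

Lemma pow2_gt0 K : 0 < 2 ^ K.
Proof. apply pow_lt; lra. Qed.

Lemma INR_pow2 K : INR (2 ^ K) = 2 ^ K.
Proof. rewrite pow_INR. reflexivity. Qed.

Lemma dyadic_ge0 K j : 0 <= dyadic K j.
Proof.
  unfold dyadic. apply Rmult_le_pos; [apply pos_INR|].
  left; apply Rinv_0_lt_compat, pow2_gt0.
Qed.

Lemma dyadic_le_iff K a K' b : dyadic K a <= dyadic K' b <-> (a * 2 ^ K' <= b * 2 ^ K)%nat.
Proof.
  unfold dyadic. pose proof (pow2_gt0 K). pose proof (pow2_gt0 K').
  split; intros H1.
  - apply INR_le. rewrite !mult_INR, !INR_pow2.
    apply Rmult_le_compat_r with (r := 2 ^ K * 2 ^ K') in H1; [|nra].
    replace (INR a / 2 ^ K * (2 ^ K * 2 ^ K')) with (INR a * 2 ^ K') in H1 by (field; lra).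
    replace (INR b / 2 ^ K' * (2 ^ K * 2 ^ K')) with (INR b * 2 ^ K) in H1 by (field; lra).
    lra.
  - apply le_INR in H1. rewrite !mult_INR, !INR_pow2 in H1.
    apply Rmult_le_reg_r with (r := 2 ^ K * 2 ^ K'); [nra|].
    replace (INR a / 2 ^ K * (2 ^ K * 2 ^ K')) with (INR a * 2 ^ K') by (field; lra).
    replace (INR b / 2 ^ K' * (2 ^ K * 2 ^ K')) with (INR b * 2 ^ K) by (field; lra).
    lra.
Qed.

Lemma dyadic_rescale K n j : dyadic (K + n) (j * 2 ^ n) = dyadic K j.
Proof.
  unfold dyadic. rewrite mult_INR, INR_pow2, pow_add.
  pose proof (pow2_gt0 K); pose proof (pow2_gt0 n). field; lra.
Qed.

Lemma dyadic_add K a b : dyadic K (a + b) = dyadic K a + dyadic K b.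
Proof. unfold dyadic. rewrite plus_INR. pose proof (pow2_gt0 K). field; lra. Qed.

Lemma dyadic_lt_one K a : dyadic K a < 1 -> (a < 2 ^ K)%nat.
Proof.
  intros H. enough (~ (2 ^ K <= a)%nat) by lia. intros Hle.
  assert (dyadic 0 1 <= dyadic K a) by (apply dyadic_le_iff; simpl; lia).
  unfold dyadic at 1 in H0. simpl in H0. lra.
Qed.

Lemma exists_dyadic_lt c eps m : 0 < eps -> exists K, (m <= K)%nat /\ dyadic K c < eps.
Proof.
  intros He. destruct (archimed (INR c / eps)) as [Hup _].
  exists (m + Z.to_nat (up (INR c / eps)))%nat. split; [lia|].
  set (K := (m + Z.to_nat (up (INR c / eps)))%nat).
  assert (HK : INR c / eps < 2 ^ K).
  { apply Rlt_le_trans with (IZR (up (INR c / eps))); [exact Hup|].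
    apply Rle_trans with (INR K).
    - destruct (Z_le_gt_dec 0 (up (INR c / eps))) as [Hz|Hz].
      + rewrite <- (Z2Nat.id _ Hz), <- INR_IZR_INZ. apply le_INR. unfold K; lia.
      + apply Rle_trans with (IZR 0); [apply IZR_le; lia|apply pos_INR].
    - rewrite <- INR_pow2. apply le_INR, Nat.lt_le_incl, Nat.pow_gt_lin_r; lia. }
  unfold dyadic. pose proof (pow2_gt0 K). pose proof (pos_INR c).
  apply Rmult_lt_reg_r with (2 ^ K); [lra|].
  unfold Rdiv in *. rewrite Rmult_assoc, Rinv_l by lra.
  apply Rmult_lt_compat_r with (r := eps) in HK; [|lra].
  rewrite Rmult_assoc, Rinv_l, Rmult_1_r in HK by lra. lra.
Qed.

Lemma exists_dyadic_between a b : 0 <= a < b -> exists K j, a < dyadic K j < b.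
Proof.
  intros [Ha Hab]. destruct (exists_dyadic_lt 1 (b - a) 0) as [K [_ HK]]; [lra|].
  pose proof (pow2_gt0 K).
  destruct (archimed (a * 2 ^ K)) as [H1 H2].
  assert (Hz : (0 <= up (a * 2 ^ K))%Z) by (apply le_IZR; nra).
  exists K, (Z.to_nat (up (a * 2 ^ K))).
  unfold dyadic in *. rewrite INR_IZR_INZ, Z2Nat.id by exact Hz. simpl (INR 1) in HK.
  split.
  - apply Rmult_lt_reg_r with (2 ^ K); [lra|].
    unfold Rdiv; rewrite Rmult_assoc, Rinv_l by lra. lra.
  - apply Rmult_lt_reg_r with (2 ^ K); [lra|].
    unfold Rdiv in *; rewrite Rmult_assoc, Rinv_l by lra.
    apply Rmult_lt_compat_r with (r := 2 ^ K) in HK; [|lra].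
    rewrite Rmult_assoc, Rinv_l in HK by lra. nra.
Qed.

Section Entourages.
Variable X : Type.

Definition diagonal : entourage X := fun x y => x = y.

Lemma comp_diagonal_l (U : entourage X) : comp diagonal U = U.
Proof.
  apply functional_extensionality; intros x; apply functional_extensionality; intros z.
  apply propositional_extensionality; split.
  - intros [y [<- Hz]]; exact Hz.
  - intros H; exists x; split; [reflexivity|exact H].
Qed.

Lemma comp_assoc_subrel (U V W : entourage X) : subrel (comp (comp U V) W) (comp U (comp V W)).
Proof. intros x z [y [[u [H1 H2]] H3]]. exists u; split; [|exists y]; auto. Qed.

Lemma comp_subrel (U V U' V' : entourage X) :
  subrel U U' -> subrel V V' -> subrel (comp U V) (comp U' V').
Proof. intros H1 H2 x z [y [? ?]]; exists y; auto. Qed.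

End Entourages.

Arguments diagonal {X}.

Section QuasiUniformity.
Variables (X : Type) (Q : entourage X -> Prop).
Hypothesis HQ : quasi_uniformity Q.

Lemma Q_full : Q (fun _ _ => True).
Proof. exact (proj1 HQ). Qed.

Lemma Q_refl U x : Q U -> U x x.
Proof. intros HU. exact (proj1 (proj2 HQ) U HU x). Qed.

Lemma Q_superset U V : Q U -> subrel U V -> Q V.
Proof. exact (proj1 (proj2 (proj2 HQ)) U V). Qed.

Lemma Q_inter U V : Q U -> Q V -> Q (fun x y => U x y /\ V x y).
Proof.
  intros HU HV. destruct (proj1 (proj2 (proj2 (proj2 HQ))) U V HU HV) as [W [HW [H1 H2]]].
  apply Q_superset with W; [exact HW|]. intros x y Hw; split; auto.
Qed.

Lemma base_half B U : is_base Q B -> Q U -> exists V, B V /\ subrel (comp V V) U.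
Proof.
  intros [HBQ HQB] HU. destruct (proj2 (proj2 (proj2 (proj2 HQ))) U HU) as [W [HW Hs]].
  destruct (HQB W HW) as [V [HV HVW]]. exists V; split; [exact HV|].
  intros x z Hxz. apply Hs. revert Hxz. apply comp_subrel; exact HVW.
Qed.

Lemma closure_incl S : subset S (closure Q S).
Proof. intros x Sx W _ Wx; exists x; auto. Qed.

Lemma closure_mono (S T : X -> Prop) : subset S T -> subset (closure Q S) (closure Q T).
Proof. intros H x C W HW Wx; destruct (C W HW Wx) as [y [? ?]]; exists y; auto. Qed.

Lemma not_closure_nbhd S x :
  ~ closure Q S x -> exists U, Q U /\ forall y, U x y -> ~ closure Q S y.
Proof.
  intros N. apply not_all_ex_not in N; destruct N as [W N].
  apply imply_to_and in N; destruct N as [HW N].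
  apply imply_to_and in N; destruct N as [Wx N].
  destruct (HW x Wx) as [U [HU Hs]]. exists U; split; [exact HU|].
  intros y Uy Cy. destruct (Cy W HW (Hs y Uy)) as [z [Wz Sz]].
  apply N; exists z; auto.
Qed.

Lemma interior_nbhd S x : interior Q S x -> exists U, Q U /\ subset (ball x U) S.
Proof.
  intros [W [HW [Wx HS]]]. destruct (HW x Wx) as [U [HU Hs]].
  exists U; split; [exact HU|]. intros y Uy; apply HS, Hs, Uy.
Qed.

Lemma interior_mono (S T : X -> Prop) : subset S T -> subset (interior Q S) (interior Q T).
Proof. intros H x [W [HW [Wx Hs]]]. exists W; repeat split; auto. intros y Wy; apply H, Hs, Wy. Qed.

Definition cont_at (f : X -> R) (x : X) :=
  forall eps, 0 < eps -> exists U, Q U /\ forall y, U x y -> Rabs (f y - f x) < eps.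

Lemma qcontinuous_iff f : qcontinuous Q f <-> forall x, cont_at f x.
Proof.
  split.
  - intros Hc x eps He.
    assert (HO : openR (fun r => Rabs (r - f x) < eps)).
    { intros r Hr; exists (eps - Rabs (r - f x)); split; [lra|].
      intros s Hs. pose proof (Rabs_triang (s - r) (r - f x)).
      replace (s - r + (r - f x)) with (s - f x) in H by ring. lra. }
    destruct (Hc _ HO x) as [U [HU Hs]].
    { rewrite Rminus_diag, Rabs_R0; exact He. }
    exists U; split; auto.
  - intros Hc O HO x Ox. destruct (HO _ Ox) as [del [Hd Hs]].
    destruct (Hc x del Hd) as [U [HU Hu]]. exists U; split; [exact HU|].
    intros y Uy; apply Hs, Hu, Uy.
Qed.

Lemma cont_at_semicontinuous f y :
  (forall t, t < f y -> exists U, Q U /\ forall z, U y z -> t < f z) ->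
  (forall t, f y < t -> exists U, Q U /\ forall z, U y z -> f z < t) ->
  cont_at f y.
Proof.
  intros Hl Hu eps He.
  destruct (Hl (f y - eps)) as [U1 [HU1 Hu1]]; [lra|].
  destruct (Hu (f y + eps)) as [U2 [HU2 Hu2]]; [lra|].
  exists (fun a b => U1 a b /\ U2 a b); split; [apply Q_inter; auto|].
  intros z [h1 h2]. specialize (Hu1 z h1); specialize (Hu2 z h2).
  apply Rabs_def1; lra.
Qed.

Lemma cont_at_const c x : cont_at (fun _ => c) x.
Proof.
  intros eps He; exists (fun _ _ => True); split; [exact Q_full|].
  intros; rewrite Rminus_diag, Rabs_R0; exact He.
Qed.

Lemma cont_at_max f g x :
  cont_at f x -> cont_at g x -> cont_at (fun y => Rmax (f y) (g y)) x.
Proof.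
  intros Hf Hg eps He. destruct (Hf eps He) as [U [HU Hu]].
  destruct (Hg eps He) as [V [HV Hv]].
  exists (fun a b => U a b /\ V a b); split; [apply Q_inter; auto|].
  intros y [Uy Vy]. specialize (Hu y Uy); specialize (Hv y Vy).
  apply Rabs_def2 in Hu; apply Rabs_def2 in Hv.
  apply Rabs_def1; unfold Rmax; repeat destruct Rle_dec; lra.
Qed.

Lemma cont_at_min c f x : cont_at f x -> cont_at (fun y => Rmin c (f y)) x.
Proof.
  intros Hf eps He. destruct (Hf eps He) as [U [HU Hu]].
  exists U; split; [exact HU|]. intros y Uy. specialize (Hu y Uy).
  apply Rabs_def2 in Hu. apply Rabs_def1; unfold Rmin; repeat destruct Rle_dec; lra.
Qed.

Lemma cont_at_div f c x : 0 < c -> cont_at f x -> cont_at (fun y => f y / c) x.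
Proof.
  intros Hc Hf eps He. destruct (Hf (eps * c)) as [U [HU Hu]]; [nra|].
  exists U; split; [exact HU|]. intros y Uy. specialize (Hu y Uy).
  replace (f y / c - f x / c) with ((f y - f x) / c) by (field; lra).
  unfold Rdiv; rewrite Rabs_mult, Rabs_inv, (Rabs_right c) by lra.
  apply Rmult_lt_reg_r with c; [exact Hc|]. rewrite Rmult_assoc, Rinv_l by lra. lra.
Qed.

Lemma generates_uniform D d e : generates Q D -> D d -> 0 < e -> Q (strict_ent d e).
Proof.
  intros Hg Hd He. apply (proj2 (Hg _)). exists ((d, e) :: nil). split.
  - constructor; auto.
  - intros x y H; inversion H; subst; auto.
Qed.

Lemma Q_Forall_lt (D : (X -> X -> R) -> Prop) l c :
  (forall d e, D d -> 0 < e -> Q (strict_ent d e)) -> 0 < c ->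
  Forall (fun p => D (fst p) /\ 0 < snd p) l ->
  Q (fun x y => Forall (fun p => fst p x y < snd p * c) l).
Proof.
  intros HD Hc; induction 1 as [|p l [Dp Hp] _ IH].
  - apply Q_superset with (fun _ _ => True); [exact Q_full|]. intros; constructor.
  - apply Q_superset with
      (fun x y => strict_ent (fst p) (snd p * c) x y /\
                  Forall (fun p => fst p x y < snd p * c) l).
    + apply Q_inter; [apply HD; [exact Dp|nra]|exact IH].
    + intros x y [H1 H2]; constructor; auto.
Qed.

End QuasiUniformity.

Lemma exists_half_chain X (Q : entourage X -> Prop) B V0 :
  quasi_uniformity Q -> is_base Q B -> B V0 ->
  exists V : nat -> entourage X, V 0%nat = V0 /\ (forall n, B (V n)) /\
    forall n, subrel (comp (V (S n)) (V (S n))) (V n).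
Proof.
  intros HQ HB HV0.
  destruct (choice (fun (U U' : {U | B U}) =>
                      subrel (comp (proj1_sig U') (proj1_sig U')) (proj1_sig U)))
    as [next Hnext].
  { intros [U HU]. destruct (base_half X Q HQ B U HB (proj1 HB U HU)) as [V [HV Hs]].
    exists (exist _ V HV); exact Hs. }
  exists (fun n => proj1_sig (Nat.iter n next (exist _ V0 HV0))).
  split; [reflexivity|split].
  - intros n; exact (proj2_sig (Nat.iter n next (exist _ V0 HV0))).
  - intros n; exact (Hnext (Nat.iter n next (exist _ V0 HV0))).
Qed.

Section DyadicChain.
Variables (X : Type) (Q : entourage X -> Prop).
Hypothesis HQ : quasi_uniformity Q.
Variable V : nat -> entourage X.
Hypothesis V_in_Q : forall n, Q (V n).
Hypothesis V_half : forall n, subrel (comp (V (S n)) (V (S n))) (V n).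

(* [W K j] is the entourage attached to the dyadic [j / 2^K]; beyond [1] it is
   the full relation. *)
Fixpoint W (K j : nat) : entourage X :=
  match K with
  | O => match j with O => diagonal | 1%nat => V O | _ => fun _ _ => True end
  | S K' => if Nat.even j then W K' (Nat.div2 j) else comp (W K' (Nat.div2 j)) (V (S K'))
  end.

Lemma W_succ K j :
  W (S K) j = if Nat.even j then W K (Nat.div2 j) else comp (W K (Nat.div2 j)) (V (S K)).
Proof. reflexivity. Qed.

Lemma W_double K j : W (S K) (2 * j) = W K j.
Proof. rewrite W_succ, Nat.even_even, Nat.div2_double. reflexivity. Qed.

Lemma W_double_succ K j : W (S K) (S (2 * j)) = comp (W K j) (V (S K)).
Proof.
  rewrite W_succ. replace (S (2 * j)) with (2 * j + 1)%nat by lia.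
  rewrite Nat.even_odd. replace (2 * j + 1)%nat with (S (2 * j)) by lia.
  rewrite Nat.div2_succ_double. reflexivity.
Qed.

Lemma W_zero K : W K 0 = diagonal.
Proof. induction K; auto. Qed.

Lemma W_one K : subrel (V K) (W K 1).
Proof.
  destruct K as [|K]; [intros x y h; exact h|].
  change 1%nat with (S (2 * 0)). rewrite W_double_succ, W_zero, comp_diagonal_l.
  intros x y h; exact h.
Qed.

Lemma W_step K j : subrel (comp (W K j) (V K)) (W K (S j)).
Proof.
  revert j; induction K as [|K IH]; intros j.
  - destruct j as [|[|j]]; simpl; intros x z; [intros [y [<- Hz]]; exact Hz|auto|auto].
  - destruct (Nat.Even_or_Odd j) as [[i ->]|[i ->]].
    + rewrite W_double, W_double_succ. intros x z H; exact H.
    + replace (2 * i + 1)%nat with (S (2 * i)) by lia.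
      replace (S (S (2 * i))) with (2 * S i)%nat by lia.
      rewrite W_double_succ, W_double.
      intros x z H. apply IH. apply comp_assoc_subrel in H. revert H.
      apply comp_subrel; [intros ? ? h; exact h|apply V_half].
Qed.

Lemma W_mono K j j' : (j <= j')%nat -> subrel (W K j) (W K j').
Proof.
  induction 1 as [|j' _ IH]; intros x y h; [exact h|].
  apply W_step. exists y; split; [apply IH, h|apply (Q_refl X Q HQ), V_in_Q].
Qed.

Lemma W_rescale K n j : W (K + n) (j * 2 ^ n) = W K j.
Proof.
  induction n as [|n IH]; [rewrite Nat.add_0_r, Nat.mul_1_r; reflexivity|].
  rewrite Nat.add_succ_r, Nat.pow_succ_r', <- IH.
  replace (j * (2 * 2 ^ n))%nat with (2 * (j * 2 ^ n))%nat by lia.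
  apply W_double.
Qed.

Lemma W_dyadic_mono K j K' j' : dyadic K' j' <= dyadic K j -> subrel (W K' j') (W K j).
Proof.
  intros H. apply dyadic_le_iff in H.
  rewrite <- (W_rescale K' K j'), <- (W_rescale K K' j), Nat.add_comm.
  apply W_mono, H.
Qed.

Lemma W_sub_V0 K j : dyadic K j <= 1 -> subrel (W K j) (V 0%nat).
Proof. intros H. apply (W_dyadic_mono 0 1). unfold dyadic at 2; simpl; lra. Qed.

Definition rho_level (x y : X) (r : R) : Prop :=
  r = 1 \/ exists K j, r = dyadic K j /\ closure Q (ball x (W K j)) y.

Lemma rho_level_ge0 x y r : rho_level x y r -> 0 <= r.
Proof. intros [->|[K [j [-> _]]]]; [lra|apply dyadic_ge0]. Qed.

Definition rho (x y : X) : R :=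
  proj1_sig (is_inf_exists (rho_level x y) (ex_intro _ 1 (or_introl eq_refl))
                           (ex_intro _ 0 (rho_level_ge0 x y))).

Lemma rho_is_inf x y : is_inf (rho_level x y) (rho x y).
Proof. exact (proj2_sig (is_inf_exists _ _ _)). Qed.

Lemma rho_le x y r : rho_level x y r -> rho x y <= r.
Proof. apply (proj1 (rho_is_inf x y)). Qed.

Lemma rho_ge0 x y : 0 <= rho x y.
Proof. apply (proj2 (rho_is_inf x y)), rho_level_ge0. Qed.

Lemma rho_le1 x y : rho x y <= 1.
Proof. apply rho_le; left; reflexivity. Qed.

Lemma rho_lt x y t : rho x y < t -> exists r, rho_level x y r /\ r < t.
Proof. apply is_inf_lt, rho_is_inf. Qed.

Lemma rho_refl x : rho x x = 0.
Proof.
  apply Rle_antisym; [|apply rho_ge0]. apply rho_le. right. exists 0%nat, 0%nat.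
  split; [unfold dyadic; simpl; lra|]. apply closure_incl. reflexivity.
Qed.

Lemma rho_lt1_closure x y : rho x y < 1 -> closure Q (ball x (V 0%nat)) y.
Proof.
  intros H. destruct (rho_lt _ _ _ H) as [r [[->|[K [j [-> Hc]]]] Hr]]; [lra|].
  revert Hc; apply closure_mono. intros z; apply W_sub_V0. lra.
Qed.

Lemma rho_uniform : uniform_premetric Q rho.
Proof.
  intros e He. destruct (exists_dyadic_lt 1 e 0 He) as [K [_ HK]].
  apply (Q_superset X Q HQ (V K)); [apply V_in_Q|]. intros x y H. unfold strict_ent.
  enough (rho x y <= dyadic K 1) by lra.
  apply rho_le. right. exists K, 1%nat. split; [reflexivity|]. apply closure_incl, W_one, H.
Qed.

Lemma rho_lower_semicontinuous x y t :
  t < rho x y -> exists U, Q U /\ forall z, U y z -> t < rho x z.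
Proof.
  intros Ht. destruct (Rlt_or_le t 0) as [Hn|Hp].
  { exists (fun _ _ => True); split; [exact (Q_full X Q HQ)|].
    intros; pose proof (rho_ge0 x z); lra. }
  destruct (exists_dyadic_between t (rho x y)) as [K [j [H1 H2]]]; [lra|].
  assert (Hnc : ~ closure Q (ball x (W K j)) y).
  { intros C. enough (rho x y <= dyadic K j) by lra. apply rho_le; right; eauto. }
  destruct (not_closure_nbhd X Q _ _ Hnc) as [U [HU Hu]].
  exists U; split; [exact HU|]. intros z Uz.
  apply Rlt_le_trans with (dyadic K j); [exact H1|].
  apply (proj2 (rho_is_inf x z)). intros r [->|[K' [j' [-> Hc]]]].
  - pose proof (rho_le1 x y); lra.
  - apply Rnot_lt_le; intros Hl. apply (Hu z Uz). revert Hc; apply closure_mono.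
    intros w; apply W_dyadic_mono. lra.
Qed.

Section PointRotund.
Variable B : entourage X -> Prop.
Hypothesis V_in_B : forall n, B (V n).
Hypothesis B_mult : multiplicative B.
Hypothesis B_point_rotund : point_rotund_base Q B.

Lemma W_in_base K j : (1 <= j <= 2 ^ K)%nat -> B (W K j).
Proof.
  revert j; induction K as [|K IH]; intros j Hj.
  - simpl in Hj. replace j with 1%nat by lia. apply V_in_B.
  - simpl in Hj. destruct (Nat.Even_or_Odd j) as [[i ->]|[i ->]].
    + rewrite W_double. apply IH. lia.
    + replace (2 * i + 1)%nat with (S (2 * i)) by lia. rewrite W_double_succ.
      destruct i as [|i]; [rewrite W_zero, comp_diagonal_l; apply V_in_B|].
      apply B_mult; [apply IH; lia|apply V_in_B].
Qed.

(* Point-rotundity puts a neighbourhood of [y] into the closure of a ball of [x]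
   one [V n]-step larger; refining to a level [n] fine enough keeps that below [t]. *)
Lemma rho_upper_semicontinuous x y t :
  rho x y < t -> exists U, Q U /\ forall z, U y z -> rho x z < t.
Proof.
  intros Ht. destruct (Rlt_or_le 1 t) as [H1|H1].
  { exists (fun _ _ => True); split; [exact (Q_full X Q HQ)|].
    intros; pose proof (rho_le1 x z); lra. }
  destruct (rho_lt x y t Ht) as [r [[->|[K [j [-> Hc]]]] Hr]]; [lra|].
  destruct (exists_dyadic_lt 2 (t - dyadic K j) K) as [n [Hn Hs]]; [lra|].
  replace n with (K + (n - K))%nat in * by lia. set (m := (n - K)%nat) in *.
  set (j2 := (j * 2 ^ m + 1)%nat).
  assert (Hv : dyadic (K + m) (S j2) = dyadic K j + dyadic (K + m) 2).
  { unfold j2. replace (S (j * 2 ^ m + 1)) with (j * 2 ^ m + 2)%nat by lia.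
    rewrite dyadic_add, dyadic_rescale. reflexivity. }
  assert (Hlt : (S j2 < 2 ^ (K + m))%nat) by (apply dyadic_lt_one; lra).
  assert (Hy : closure Q (ball x (W (K + m) j2)) y).
  { revert Hc; apply closure_mono. intros w. rewrite <- (W_rescale K m j).
    apply W_mono. unfold j2; lia. }
  destruct (interior_nbhd X Q _ _
              (B_point_rotund x _ _ (V_in_B (K + m)) (W_in_base (K + m) j2
                 ltac:(unfold j2 in *; lia)) y Hy)) as [U [HU Hu]].
  exists U; split; [exact HU|]. intros z Uz.
  apply Rle_lt_trans with (dyadic (K + m) (S j2)); [|lra].
  apply rho_le. right. exists (K + m)%nat, (S j2). split; [reflexivity|].
  apply closure_mono with (S := ball x (comp (W (K + m) j2) (V (K + m)))).
  - intros w; apply W_step.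
  - apply Hu, Uz.
Qed.

Lemma rho_right_continuous : right_continuous Q rho.
Proof.
  intros x. apply qcontinuous_iff. intros y.
  apply (cont_at_semicontinuous X Q HQ).
  - apply rho_lower_semicontinuous.
  - apply rho_upper_semicontinuous.
Qed.

End PointRotund.

Section Rotund.
Variable B : entourage X -> Prop.
Hypothesis V_in_B : forall n, B (V n).
Hypothesis B_rotund : rotund_base Q B.

Lemma closure_W_round z x K0 j0 K :
  closure Q (ball z (W K0 j0)) x ->
  exists j, closure Q (ball z (W K j)) x /\ dyadic K j <= dyadic K0 j0 + dyadic K 1.
Proof.
  intros Hc. set (q := (2 ^ K0)%nat). set (n := (j0 * 2 ^ K)%nat).
  assert (Hq : (0 < q)%nat) by (apply Nat.neq_0_lt_0, Nat.pow_nonzero; lia).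
  pose proof (Nat.div_mod n q ltac:(lia)). pose proof (Nat.mod_upper_bound n q ltac:(lia)).
  exists (n / q + 1)%nat. split.
  - revert Hc; apply closure_mono. intros w. apply W_dyadic_mono, dyadic_le_iff.
    fold q n. nia.
  - rewrite dyadic_add. enough (dyadic K (n / q) <= dyadic K0 j0) by lra.
    apply dyadic_le_iff. fold q n. nia.
Qed.

(* Rotundity moves the closure of a ball of [z] from [x] to any [V (S K)]-neighbour
   of [x] at the cost of one dyadic step of level [K]; rounding costs another. *)
Lemma rho_shift K x y z : V (S K) x y -> rho z y <= rho z x + dyadic K 2.
Proof.
  intros Hxy.
  enough (rho z y - dyadic K 2 <= rho z x) by lra.
  apply (proj2 (rho_is_inf z x)). intros r [->|[K0 [j0 [-> Hc]]]].
  - pose proof (rho_le1 z y). pose proof (dyadic_ge0 K 2). lra.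
  - destruct (closure_W_round z x K0 j0 K Hc) as [j [Hcj Hj]].
    assert (Hy : closure Q (ball z (W K (S j))) y).
    { apply closure_mono with (S := ballS (ball z (W K j)) (comp (V (S K)) (V (S K)))).
      - intros w [a [Ha Haw]]. apply W_step. exists a; split; [exact Ha|apply V_half, Haw].
      - apply (B_rotund (ball z (W K j)) (V (S K)) (V (S K)) (V_in_B _) (V_in_B _)).
        exists x; split; assumption. }
    assert (rho z y <= dyadic K (S j)) by (apply rho_le; right; eauto).
    replace (S j) with (j + 1)%nat in H by lia. rewrite dyadic_add in H.
    replace 2%nat with (1 + 1)%nat in * by reflexivity. rewrite dyadic_add. lra.
Qed.

Definition rho_gap (x y : X) (v : R) : Prop := exists z, v = rho z y - rho z x.

Lemma rho_gap_bound x y : bound (rho_gap x y).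
Proof.
  exists 1. intros v [z ->]. pose proof (rho_le1 z y); pose proof (rho_ge0 z x). lra.
Qed.

Definition rho_qpm (x y : X) : R :=
  proj1_sig (completeness _ (rho_gap_bound x y) (ex_intro _ _ (ex_intro _ x eq_refl))).

Lemma rho_qpm_is_lub x y : is_lub (rho_gap x y) (rho_qpm x y).
Proof. exact (proj2_sig (completeness _ _ _)). Qed.

Lemma rho_qpm_ge x y z : rho z y - rho z x <= rho_qpm x y.
Proof. apply (proj1 (rho_qpm_is_lub x y)). exists z; reflexivity. Qed.

Lemma rho_qpm_le x y c : (forall z, rho z y - rho z x <= c) -> rho_qpm x y <= c.
Proof. intros H. apply (proj2 (rho_qpm_is_lub x y)). intros v [z ->]; apply H. Qed.

Lemma rho_le_rho_qpm x y : rho x y <= rho_qpm x y.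
Proof. pose proof (rho_qpm_ge x y x). rewrite rho_refl in H. lra. Qed.

Lemma rho_qpm_quasi_pseudometric : quasi_pseudometric rho_qpm.
Proof.
  split; [split|].
  - intros x y. pose proof (rho_le_rho_qpm x y); pose proof (rho_ge0 x y); lra.
  - intros x. apply Rle_antisym.
    + apply rho_qpm_le. intros z; lra.
    + pose proof (rho_le_rho_qpm x x). rewrite rho_refl in H. exact H.
  - intros x y z. apply rho_qpm_le. intros w.
    pose proof (rho_qpm_ge x y w); pose proof (rho_qpm_ge y z w). lra.
Qed.

Lemma rho_qpm_shift K x y y' : V (S K) y y' -> rho_qpm x y' <= rho_qpm x y + dyadic K 2.
Proof.
  intros Hy. apply rho_qpm_le. intros z.
  pose proof (rho_qpm_ge x y z). pose proof (rho_shift K y y' z Hy). lra.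
Qed.

Lemma rho_qpm_uniform : uniform_premetric Q rho_qpm.
Proof.
  intros e He. destruct (exists_dyadic_lt 2 e 0 He) as [K [_ HK]].
  apply (Q_superset X Q HQ (V (S K))); [apply V_in_Q|]. intros x y H. unfold strict_ent.
  pose proof (rho_qpm_shift K x x y H).
  rewrite (proj2 (proj1 rho_qpm_quasi_pseudometric)) in H0. lra.
Qed.

Lemma rho_qpm_right_continuous : right_continuous Q rho_qpm.
Proof.
  intros x. apply qcontinuous_iff. intros y. apply (cont_at_semicontinuous X Q HQ).
  - intros t Ht.
    assert (Hz : exists z, t < rho z y - rho z x).
    { apply NNPP; intros N. enough (rho_qpm x y <= t) by lra.
      apply rho_qpm_le. intros z. apply Rnot_lt_le. intros h; apply N; eauto. }
    destruct Hz as [z Hz].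
    destruct (rho_lower_semicontinuous z y (t + rho z x)) as [U [HU Hu]]; [lra|].
    exists U; split; [exact HU|]. intros y' Uy.
    pose proof (Hu y' Uy). pose proof (rho_qpm_ge x y' z). lra.
  - intros t Ht. destruct (exists_dyadic_lt 2 (t - rho_qpm x y) 0) as [K [_ HK]]; [lra|].
    exists (V (S K)); split; [apply V_in_Q|]. intros y' Hy.
    pose proof (rho_qpm_shift K x y y' Hy). lra.
Qed.

End Rotund.

End DyadicChain.

Section DistBar.
Variables (X : Type) (Q : entourage X -> Prop) (B : entourage X -> Prop).
Hypothesis HQ : quasi_uniformity Q.
Hypothesis HB : is_base Q B.
Hypothesis B_rotund : rotund_base Q B.
Variable d : X -> X -> R.
Hypothesis d_qpm : quasi_pseudometric d.
Hypothesis d_uniform : uniform_premetric Q d.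
Variables (A : X -> Prop) (f : X -> R).
Hypothesis f_inf : forall x, is_inf (fun e => 0 < e /\ closure Q (dballS d A e) x) (f x).

Lemma distbar_ge0 x : 0 <= f x.
Proof. apply (proj2 (f_inf x)). intros e [He _]. lra. Qed.

Lemma distbar_lower_semicontinuous x t :
  t < f x -> exists U, Q U /\ forall z, U x z -> t < f z.
Proof.
  intros Ht. destruct (Rlt_or_le t 0) as [Hn|Hp].
  { exists (fun _ _ => True); split; [exact (Q_full X Q HQ)|].
    intros z _; pose proof (distbar_ge0 z); lra. }
  set (s := (t + f x) / 2).
  assert (Hnc : ~ closure Q (dballS d A s) x).
  { intros C. enough (f x <= s) by (unfold s in *; lra).
    apply (proj1 (f_inf x)). split; [unfold s; lra|exact C]. }
  destruct (not_closure_nbhd X Q _ _ Hnc) as [U [HU Hun]].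
  exists U; split; [exact HU|]. intros z Uz.
  apply Rlt_le_trans with s; [unfold s; lra|].
  apply (proj2 (f_inf z)). intros e [He Hc]. apply Rnot_lt_le; intros Hl.
  apply (Hun z Uz). revert Hc; apply closure_mono.
  intros w [a [Ha Hda]]. exists a; split; [exact Ha|lra].
Qed.

Lemma distbar_upper_semicontinuous x t :
  f x < t -> exists U, Q U /\ forall z, U x z -> f z < t.
Proof.
  intros Ht. destruct (is_inf_lt _ _ t (f_inf x) Ht) as [e [[He Hce] Het]].
  destruct (base_half X Q HQ B _ HB (d_uniform ((t - e) / 2) ltac:(lra)))
    as [U [HU Hhalf]].
  exists U; split; [exact (proj1 HB U HU)|]. intros z Hz.
  enough (f z <= e + (t - e) / 2) by lra.
  apply (proj1 (f_inf z)). split; [lra|].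
  apply closure_mono with (S := ballS (dballS d A e) (comp U U)).
  - intros w [a [[a0 [Ha0 Hda]] Haw]]. exists a0; split; [exact Ha0|].
    pose proof (Hhalf a w Haw). pose proof (proj2 d_qpm a0 a w). unfold strict_ent in *. lra.
  - apply (B_rotund (dballS d A e) U U HU HU z). exists x; split; assumption.
Qed.

End DistBar.

Lemma rotund_distbar_continuous X (Q : entourage X -> Prop) B d :
  quasi_uniformity Q -> is_base Q B -> rotund_base Q B ->
  quasi_pseudometric d -> uniform_premetric Q d -> distbar_continuous Q d.
Proof.
  intros HQ HB HR Hd Hu A _ f Hf. apply qcontinuous_iff. intros x.
  apply (cont_at_semicontinuous X Q HQ).
  - apply (distbar_lower_semicontinuous X Q HQ d A f Hf).
  - apply (distbar_upper_semicontinuous X Q B HQ HB HR d Hd Hu A f Hf).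
Qed.

(* A maximal set of choice functions that are pairwise distinct in every
   coordinate exhausts some [F i]; reading off coordinates then injects [F i]
   into every [F j]. *)
Lemma exists_least_cardinal (I A : Type) (i0 : I) (F : I -> A -> Prop) :
  exists i, forall j, exists f : {a | F i a} -> {a | F j a}, forall a b, f a = f b -> a = b.
Proof.
  set (Tup := {t : I -> A | forall i, F i (t i)}).
  set (Adm := fun S : Tup -> Prop => forall i (s1 s2 : Tup), S s1 -> S s2 ->
                 proj1_sig s1 i = proj1_sig s2 i -> s1 = s2).
  destruct (@classical_sets.Zorn_bigcup Tup Adm) as [S0 [HS0 Hmax]].
  { intros Fam HFam Htot i s1 s2 [A1 HA1 h1] [A2 HA2 h2] He.
    destruct (Htot A1 A2 HA1 HA2) as [H|H].
    - apply (HFam A2 HA2 i); auto.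
    - apply (HFam A1 HA1 i); auto. }
  assert (Hsurj : exists i, forall a, F i a -> exists s : Tup, S0 s /\ proj1_sig s i = a).
  { apply NNPP; intros N.
    assert (Hmiss : forall i, exists a, F i a /\ forall s : Tup, S0 s -> proj1_sig s i <> a).
    { intros i. apply NNPP; intros N2. apply N. exists i. intros a Fa.
      apply NNPP; intros N3. apply N2. exists a; split; [exact Fa|].
      intros s Ss E. apply N3. exists s; auto. }
    destruct (choice _ Hmiss) as [g Hg].
    set (t := exist (fun t => forall i, F i (t i)) g (fun i => proj1 (Hg i)) : Tup).
    assert (Ht : Adm (fun s => S0 s \/ s = t)).
    { intros i s1 s2 [h1| ->] [h2| ->] He.
      - apply (HS0 i); auto.
      - exfalso. apply (proj2 (Hg i) s1 h1), He.
      - exfalso. apply (proj2 (Hg i) s2 h2). symmetry; exact He.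
      - reflexivity. }
    apply (Hmax _ (conj (fun s h => or_introl h) (fun Hsub => proj2 (Hg i0) t
                        (Hsub t (or_intror eq_refl)) eq_refl)) Ht). }
  destruct Hsurj as [i Hs]. exists i. intros j.
  destruct (choice (fun (a : {a | F i a}) (s : Tup) => S0 s /\ proj1_sig s i = proj1_sig a))
    as [pick Hpick].
  { intros [a Fa]. apply Hs, Fa. }
  exists (fun a => exist (fun b => F j b) (proj1_sig (pick a) j) (proj2_sig (pick a) j)).
  intros a b H. apply (f_equal (@proj1_sig _ _)) in H. simpl in H.
  destruct (Hpick a) as [Sa Ea]. destruct (Hpick b) as [Sb Eb].
  assert (pick a = pick b) by (apply (HS0 j); auto).
  destruct a as [a Pa], b as [b Pb]. simpl in *. rewrite H0 in Ea. rewrite Ea in Eb. subst b.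
  f_equal. apply proof_irrelevance.
Qed.

Section Main.
Variables (X : Type) (Q : entourage X -> Prop).
Hypothesis HQ : quasi_uniformity Q.

Lemma regular_semiregular : uniformly_regular Q -> uniformly_semiregular Q.
Proof.
  intros Hr U HU. destruct (Hr U HU) as [V [HV Hv]]. exists V; split; [exact HV|].
  intros x y [W [_ [Wy Hs]]]. apply Hv, Hs, Wy.
Qed.

Lemma point_rotund_semiregular_regular :
  point_rotund Q -> uniformly_semiregular Q -> uniformly_regular Q.
Proof.
  intros [B [HB [_ HPR]]] Hs U HU.
  destruct (Hs U HU) as [V1 [HV1 Hv1]].
  destruct (base_half X Q HQ B V1 HB HV1) as [V [HBV Hv]].
  exists V; split; [exact (proj1 HB V HBV)|].
  intros x y Hy. apply Hv1.
  apply (interior_mono X Q (closure Q (ball x (comp V V)))).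
  - apply closure_mono. intros z; apply Hv.
  - exact (HPR x V V HBV HBV y Hy).
Qed.

Lemma completely_regular_regular : uniformly_completely_regular Q -> uniformly_regular Q.
Proof.
  intros Hu U HU. destruct (Hu U HU) as [d [_ [_ [Hun [Hrc Hball]]]]].
  exists (strict_ent d (1 / 2)); split; [apply Hun; lra|].
  intros x y Hy. apply Hball. unfold dball.
  apply Rle_lt_trans with (1 / 2); [|lra]. apply Rnot_lt_le; intros Hgt.
  destruct (Hy _ (Hrc x _ (openR_gt (1 / 2))) Hgt) as [z [Hz1 Hz2]].
  unfold ball, strict_ent in Hz2. lra.
Qed.

Lemma regular_half_chain B U :
  is_base Q B -> uniformly_regular Q -> Q U ->
  exists V : nat -> entourage X, (forall n, B (V n)) /\
    (forall n, subrel (comp (V (S n)) (V (S n))) (V n)) /\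
    forall x, subset (closure Q (ball x (V 0%nat))) (ball x U).
Proof.
  intros HB Hr HU. destruct (Hr U HU) as [U' [HU' Hcl]].
  destruct (proj2 HB U' HU') as [V0 [HV0 Hsub]].
  destruct (exists_half_chain X Q B V0 HQ HB HV0) as [V [<- [HBV Hhalf]]].
  exists V; repeat split; [exact HBV|exact Hhalf|].
  intros x y Hy. apply Hcl. revert Hy; apply closure_mono. intros z; apply Hsub.
Qed.

Lemma point_rotund_regular_completely_regular :
  point_rotund Q -> uniformly_regular Q -> uniformly_completely_regular Q.
Proof.
  intros [B [HB [HBm HPR]]] Hr U HU.
  destruct (regular_half_chain B U HB Hr HU) as [V [HBV [Hhalf Hcl]]].
  assert (HV : forall n, Q (V n)) by (intros n; apply (proj1 HB), HBV).
  exists (rho X Q V). repeat split.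
  - apply rho_ge0.
  - apply rho_refl.
  - apply rho_le1.
  - apply (rho_uniform X Q HQ V HV).
  - apply (rho_right_continuous X Q HQ V HV Hhalf B HBV HBm HPR).
  - intros x y Hy. apply Hcl, (rho_lt1_closure X Q HQ V HV Hhalf), Hy.
Qed.

Lemma rotund_regular_quasi_pseudometric U :
  rotund Q -> uniformly_regular Q -> Q U ->
  exists d, quasi_pseudometric d /\ right_continuous Q d /\ distbar_continuous Q d /\
    uniform_premetric Q d /\ forall x y, d x y < 1 -> U x y.
Proof.
  intros [B [HB [_ HR]]] Hr HU.
  destruct (regular_half_chain B U HB Hr HU) as [V [HBV [Hhalf Hcl]]].
  assert (HV : forall n, Q (V n)) by (intros n; apply (proj1 HB), HBV).
  pose proof (rho_qpm_quasi_pseudometric X Q V) as Hqpm.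
  pose proof (rho_qpm_uniform X Q HQ V HV Hhalf B HBV HR) as Hun.
  exists (rho_qpm X Q V). repeat split.
  - apply Hqpm.
  - apply Hqpm.
  - apply Hqpm.
  - apply (rho_qpm_right_continuous X Q HQ V HV Hhalf B HBV HR).
  - apply (rotund_distbar_continuous X Q B); assumption.
  - exact Hun.
  - intros x y Hy. apply Hcl, (rho_lt1_closure X Q HQ V HV Hhalf).
    pose proof (rho_le_rho_qpm X Q V x y). lra.
Qed.

Lemma generates_of_uniform (D : (X -> X -> R) -> Prop) :
  (forall d, D d -> uniform_premetric Q d) ->
  (forall U, Q U -> exists d, D d /\ forall x y, d x y < 1 -> U x y) ->
  generates Q D.
Proof.
  intros Hun Hsub W; split.
  - intros HW. destruct (Hsub W HW) as [d [Hd Hdw]].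
    exists ((d, 1) :: nil). split; [constructor; [split; [exact Hd|simpl; lra]|constructor]|].
    intros x y H. inversion H; subst. apply Hdw; assumption.
  - intros [l [Hl Hw]].
    apply (Q_superset X Q HQ (fun x y => Forall (fun p => fst p x y < snd p * 1) l)).
    + apply (Q_Forall_lt X Q HQ D); [intros d e Hd; apply Hun, Hd|lra|exact Hl].
    + intros x y H. apply Hw. revert H; apply Forall_impl. intros p; lra.
Qed.

Lemma completely_regular_generated :
  uniformly_completely_regular Q ->
  exists D : (X -> X -> R) -> Prop,
    (forall d, D d -> premetric d /\ right_continuous Q d) /\ generates Q D.
Proof.
  intros Hu. exists (fun d => premetric d /\ right_continuous Q d /\ uniform_premetric Q d).
  split; [intros d [? [? _]]; split; assumption|].
  apply generates_of_uniform; [intros d [_ [_ H]]; exact H|].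
  intros U HU. destruct (Hu U HU) as [d [Hp [_ [Hun [Hrc Hb]]]]].
  exists d; split; [exact (conj Hp (conj Hrc Hun))|]. intros x y H; apply (Hb x y H).
Qed.

Section ScaledMax.
Variable D : (X -> X -> R) -> Prop.
Hypothesis HD : forall d, D d -> premetric d /\ right_continuous Q d.

Definition scaled_max (l : list ((X -> X -> R) * R)) (x y : X) : R :=
  fold_right (fun p acc => Rmax (fst p x y / snd p) acc) 0 l.

Lemma scaled_max_ge0 l x y : 0 <= scaled_max l x y.
Proof. induction l as [|p l IH]; simpl; [lra|]. eapply Rle_trans; [exact IH|apply Rmax_r]. Qed.

Lemma scaled_max_refl l x :
  Forall (fun p => D (fst p) /\ 0 < snd p) l -> scaled_max l x x = 0.
Proof.
  induction 1 as [|p l [Dp _] _ IH]; simpl; [reflexivity|]. rewrite IH.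
  rewrite (proj2 (proj1 (HD _ Dp))). unfold Rdiv; rewrite Rmult_0_l. apply Rmax_right; lra.
Qed.

Lemma scaled_max_lt_iff l x y c :
  Forall (fun p => D (fst p) /\ 0 < snd p) l -> 0 < c ->
  scaled_max l x y < c <-> Forall (fun p => fst p x y < snd p * c) l.
Proof.
  intros Hl Hc. induction Hl as [|p l [_ Hp] _ IH]; simpl.
  - split; [constructor|intros _; exact Hc].
  - rewrite Forall_cons_iff, <- IH.
    assert (fst p x y / snd p < c <-> fst p x y < snd p * c).
    { split; intros H.
      - apply Rmult_lt_compat_r with (r := snd p) in H; [|exact Hp].
        unfold Rdiv in H; rewrite Rmult_assoc, Rinv_l in H by lra. lra.
      - apply Rmult_lt_reg_r with (snd p); [exact Hp|].
        unfold Rdiv; rewrite Rmult_assoc, Rinv_l by lra. lra. }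
    split.
    + intros Hm. split; [apply H; eapply Rle_lt_trans; [apply Rmax_l|exact Hm]|].
      eapply Rle_lt_trans; [apply Rmax_r|exact Hm].
    + intros [H1 H2]. apply Rmax_lub_lt; [apply H, H1|exact H2].
Qed.

Lemma scaled_max_cont_at l x y :
  Forall (fun p => D (fst p) /\ 0 < snd p) l -> cont_at X Q (fun z => scaled_max l x z) y.
Proof.
  induction 1 as [|p l [Dp Hp] _ IH]; simpl; [apply (cont_at_const X Q HQ)|].
  apply (cont_at_max X Q HQ); [|exact IH].
  apply (cont_at_div X Q); [exact Hp|]. apply qcontinuous_iff, (proj2 (HD _ Dp)).
Qed.

(* [min(1, max_i d_i / e_i)] is a single premetric whose unit ball is the basic
   entourage [/\_i [d_i]_{<e_i}]. *)
Lemma premetrics_generated_completely_regular :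
  generates Q D -> uniformly_completely_regular Q.
Proof.
  intros Hg U HU. destruct (proj1 (Hg U) HU) as [l [Hl Hw]].
  exists (fun x y => Rmin 1 (scaled_max l x y)). repeat split.
  - intros x y. apply Rmin_glb; [lra|apply scaled_max_ge0].
  - intros x. rewrite scaled_max_refl by exact Hl. apply Rmin_right; lra.
  - intros x y; apply Rmin_l.
  - intros e He.
    apply (Q_superset X Q HQ (fun x y => Forall (fun p => fst p x y < snd p * e) l)).
    + apply (Q_Forall_lt X Q HQ D); [|exact He|exact Hl].
      intros d e' Hd; apply (generates_uniform X Q D d e' Hg Hd).
    + intros x y H. unfold strict_ent. eapply Rle_lt_trans; [apply Rmin_r|].
      apply scaled_max_lt_iff; assumption.
  - intros x. apply qcontinuous_iff. intros y. apply (cont_at_min X Q), scaled_max_cont_at, Hl.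
  - intros x y Hy. apply Hw. unfold dball in Hy.
    assert (Hlt : scaled_max l x y < 1).
    { revert Hy; unfold Rmin; destruct Rle_dec; lra. }
    apply scaled_max_lt_iff in Hlt; [|exact Hl|lra].
    revert Hlt; apply Forall_impl. intros p; lra.
Qed.

End ScaledMax.

Lemma rotund_regular_generated_chi :
  rotund Q -> uniformly_regular Q ->
  exists D : (X -> X -> R) -> Prop,
    (forall d, D d -> quasi_pseudometric d /\ right_continuous Q d /\ distbar_continuous Q d) /\
    generates Q D /\ card_le_chi Q D.
Proof.
  intros Hrot Hr.
  assert (HQbase : is_base Q Q).
  { split; [auto|]. intros U HU; exists U; split; [exact HU|intros x y h; exact h]. }
  destruct (exists_least_cardinal {B | is_base Q B} (entourage X) (exist _ Q HQbase)
              (@proj1_sig _ _)) as [[B0 HB0] Hleast].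
  destruct (choice (fun (b : entourage X) d => Q b ->
              quasi_pseudometric d /\ right_continuous Q d /\ distbar_continuous Q d /\
              uniform_premetric Q d /\ forall x y, d x y < 1 -> b x y)) as [dof Hdof].
  { intros b. destruct (classic (Q b)) as [Hb|Hb].
    - destruct (rotund_regular_quasi_pseudometric b Hrot Hr Hb) as [d Hd].
      exists d; intros _; exact Hd.
    - exists (fun _ _ => 0); intros Hb'; contradiction. }
  exists (fun d => exists b, B0 b /\ d = dof b). split; [|split].
  - intros d [b [Hb ->]]. destruct (Hdof b (proj1 HB0 b Hb)) as [H1 [H2 [H3 _]]]. auto.
  - apply generates_of_uniform.
    + intros d [b [Hb ->]]. apply (Hdof b (proj1 HB0 b Hb)).
    + intros U HU. destruct (proj2 HB0 U HU) as [b [Hb Hbu]].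
      exists (dof b). split; [exists b; auto|].
      intros x y H. apply Hbu, (Hdof b (proj1 HB0 b Hb)), H.
  - intros B HB. destruct (Hleast (exist _ B HB)) as [f Hf]. simpl in f, Hf.
    destruct (choice (fun (d : {d | exists b, B0 b /\ d = dof b}) (b : {b | B0 b}) =>
                        proj1_sig d = dof (proj1_sig b))) as [pick Hpick].
    { intros [d [b [Hb ->]]]. exists (exist _ b Hb). reflexivity. }
    exists (fun d => f (pick d)). intros [a Ha] [b Hb] H. apply Hf in H.
    pose proof (Hpick (exist _ a Ha)) as Ea. pose proof (Hpick (exist _ b Hb)) as Eb.
    simpl in Ea, Eb. rewrite H in Ea. assert (a = b) by congruence. subst b.
    f_equal. apply proof_irrelevance.
Qed.

End Main.

Theorem theorem3p4 (X : Type) (Q : (X -> X -> Prop) -> Prop) :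
  quasi_uniformity Q -> point_rotund Q ->
  (uniformly_semiregular Q <-> uniformly_regular Q) /\
  (uniformly_regular Q <-> uniformly_completely_regular Q) /\
  (rotund Q ->
     (uniformly_regular Q <->
        exists D : (X -> X -> R) -> Prop,
          (forall d, D d -> premetric d /\ right_continuous Q d) /\
          generates Q D) /\
     (uniformly_regular Q <->
        exists D : (X -> X -> R) -> Prop,
          (forall d, D d -> quasi_pseudometric d /\ right_continuous Q d /\
                            distbar_continuous Q d) /\
          generates Q D /\ card_le_chi Q D)).
Proof.
  intros HQ HPR.
  assert (Hreg_ucr : uniformly_regular Q <-> uniformly_completely_regular Q).
  { split; [apply (point_rotund_regular_completely_regular X Q HQ HPR)|].
    apply (completely_regular_regular X Q). }
  split; [|split; [exact Hreg_ucr|intros Hrot; split; split]].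
  - split; [apply (point_rotund_semiregular_regular X Q HQ HPR)|].
    apply (regular_semiregular X Q).
  - intros Hr. apply (completely_regular_generated X Q HQ), Hreg_ucr, Hr.
  - intros [D [HD Hg]]. apply Hreg_ucr, (premetrics_generated_completely_regular X Q HQ D HD Hg).
  - apply (rotund_regular_generated_chi X Q HQ Hrot).
  - intros [D [HD [Hg _]]]. apply Hreg_ucr.
    apply (premetrics_generated_completely_regular X Q HQ D); [|exact Hg].
    intros d Hd. destruct (HD d Hd) as [[Hp _] [Hrc _]]. split; assumption.
Qed.
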